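(* Let $G$ be a coarsely bottlenecked graph and $H$ a graph such that $H$ is not an asymptotic minor of $G$. For any $M\in\mathbb N$ such that $G$ does not contain an $M$-fat $H$ minor, the skeleton $G_{M,M}$ (for any choice of root $x_0\in V(G)$) contains no $3$-fat $H$ minor.
   Context: All graphs are connected (and unbounded); multi-edges are allowed. $d$ denotes the graph metric on vertices. For $M\ge 0$: sets $X,Y$ of vertices are $M$-disjoint if $d(x,y)>M$ for all $x\in X,y\in Y$; a set $X$ is $M$-connected if any two of its points are joined by a finite sequence of points of $X$ with consecutive points at distance $\le M$; $N_M(S)=\{y: d(s,y)<M\text{ for some } s\in S\}$. An $X,Y$ path is a path from a vertex of $X$ to a vertex of $Y$. $G$ is $M$-fat $n$-bottlenecked if for any two connected $M$-disjoint subgraphs $X,Y\subset G$ there is $S\subset V(G)\setminus(V(X)\cup V(Y))$, $|S|=n$, such that every $X,Y$ path meets $N_M(S)$; $G$ is coarsely bottlenecked if this holds for some $M,n\in\mathbb N$. $H$ is an $M$-fat minor of $G$ if there are connected subgraphs $B_v$ ($v\in V(H)$) and paths $P_e$ ($e\in E(H)$), $P_e$ joining $B_u$ to $B_v$ for $e=uv$, such that any two of these sets are $M$-disjoint unless they correspond to an incident vertex–edge pair of $H$; $H$ is an asymptotic minor of $G$ if $G$ has an $M$-fat $H$ minor for all $M$. Skeleton $G_{\lambda,k}$ (root $x_0$, scale $\lambda\ge1$, connectivity $k\ge1$): layers $A_{N,\lambda}=\{x: N\lambda<d(x,x_0)\le(N+1)\lambda\}$, $N\in\mathbb Z$; blocks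 are the maximal $k$-connected subsets of layers; $G_{\lambda,k}$ has a vertex per block and an edge between two blocks iff an edge of $G$ joins them. *)

(* Graphs: a vertex type V with a symmetric adjacency relation
   adj.  (Multi-edges of G are irrelevant for everything used here: metric,
   connectivity, paths.)  The minor graph H is a multigraph given by a vertex
   type VH, an edge type EH and an endpoint map endsH : EH -> VH * VH. *)
From Stdlib Require Import List ZArith Relations.
Import ListNotations.
Set Implicit Arguments.

Section Graph.
Variables (V : Type) (adj : V -> V -> Prop).

Inductive walk : nat -> V -> V -> Prop :=
| walk0 x : walk 0 x x
| walkS n x y z : adj x y -> walk n y z -> walk (S n) x z.

Definition graph_connected : Prop := forall x y : V, exists n, walk n x y.

Definition is_dist (x y : V) (n : nat) : Prop :=
  walk n x y /\ forall m, walk m x y -> n <= m.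

Definition dist_le (x y : V) (M : nat) : Prop :=
  exists m, m <= M /\ walk m x y.

Definition dist_lt (x y : V) (M : nat) : Prop :=
  exists m, m < M /\ walk m x y.

Definition M_disjoint (M : nat) (X Y : V -> Prop) : Prop :=
  forall x y, X x -> Y y -> ~ dist_le x y M.

Definition nbhd (M : nat) (S : list V) (y : V) : Prop :=
  exists s, In s S /\ dist_lt s y M.

Definition M_connected (M : nat) (X : V -> Prop) : Prop :=
  forall x y, X x -> X y ->
    clos_refl_trans V (fun a b => X a /\ X b /\ dist_le a b M) x y.

(* vertex set of a connected subgraph: nonempty, and any two of its vertices
   are joined by a walk using only vertices of the set *)
Definition conn_set (X : V -> Prop) : Prop :=
  (exists x, X x) /\
  forall x y, X x -> X y ->
    clos_refl_trans V (fun a b => X a /\ X b /\ adj a b) x y.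

Fixpoint chain (l : list V) : Prop :=
  match l with
  | x :: ((y :: _) as l') => adj x y /\ chain l'
  | _ => True
  end.

Definition is_path (l : list V) (x y : V) : Prop :=
  NoDup l /\ chain l /\ hd_error l = Some x /\ last l x = y.

Definition XY_path (X Y : V -> Prop) (l : list V) : Prop :=
  exists x y, X x /\ Y y /\ is_path l x y.

Definition fat_bottlenecked (M n : nat) : Prop :=
  forall X Y : V -> Prop, conn_set X -> conn_set Y -> M_disjoint M X Y ->
  exists S : list V,
    NoDup S /\ length S = n /\
    (forall s, In s S -> ~ X s /\ ~ Y s) /\
    forall l, XY_path X Y l -> exists z, In z l /\ nbhd M S z.

Definition coarsely_bottlenecked : Prop :=
  exists M n : nat, fat_bottlenecked M n.

Definition fat_minor (VH EH : Type) (endsH : EH -> VH * VH) (M : nat) : Prop :=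
  exists (B : VH -> V -> Prop) (P : EH -> list V),
    (forall v, conn_set (B v)) /\
    (forall e, exists x y, B (fst (endsH e)) x /\ B (snd (endsH e)) y /\
                           is_path (P e) x y) /\
    (forall u v, u <> v -> M_disjoint M (B u) (B v)) /\
    (forall e f, e <> f -> M_disjoint M (fun z => In z (P e)) (fun z => In z (P f))) /\
    (forall v e, v <> fst (endsH e) -> v <> snd (endsH e) ->
                 M_disjoint M (B v) (fun z => In z (P e))).

Definition asymptotic_minor (VH EH : Type) (endsH : EH -> VH * VH) : Prop :=
  forall M : nat, fat_minor endsH M.

Definition in_layer (x0 : V) (lam : nat) (N : Z) (x : V) : Prop :=
  exists n, is_dist x x0 n /\
    (N * Z.of_nat lam < Z.of_nat n <= (N + 1) * Z.of_nat lam)%Z.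

Definition is_block (x0 : V) (lam k : nat) (B : V -> Prop) : Prop :=
  exists N : Z,
    (exists x, B x) /\
    (forall x, B x -> in_layer x0 lam N x) /\
    M_connected k B /\
    forall B' : V -> Prop,
      (forall x, B' x -> in_layer x0 lam N x) -> M_connected k B' ->
      (forall x, B x -> B' x) -> forall x, B' x -> B x.

Definition skel_vertex (x0 : V) (lam k : nat) : Type :=
  { B : V -> Prop | is_block x0 lam k B }.

Definition skel_adj (x0 : V) (lam k : nat) (B1 B2 : skel_vertex x0 lam k) : Prop :=
  B1 <> B2 /\
  exists x y, proj1_sig B1 x /\ proj1_sig B2 y /\ adj x y.

End Graph.

(** Thicken every block of the skeleton G_{M,M} to its closed M-neighbourhood in G.
    Two vertices y, z of G at distance at most M lie in equal or adjacent blocks: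
    their layers differ by at most one; within one layer, M-connectivity and
    maximality force their blocks to coincide, and between consecutive layers a
    geodesic from y to z crosses along an edge whose ends are absorbed into the
    blocks of y and z.  So thickenings of 3-disjoint sets of blocks are M-disjoint,
    while the thickening of a connected set of blocks stays connected (blocks are
    M-connected and each point is joined to its block by a walk of length at most
    M).  A 3-fat H minor of G_{M,M} therefore thickens to an M-fat H minor of G. *)

From Stdlib Require Import List ZArith Relations Lia Wf_nat.
From Stdlib Require Import Classical IndefiniteDescription.
From Stdlib Require Import FunctionalExtensionality PropExtensionality ProofIrrelevance.
Import ListNotations.
Set Implicit Arguments.
Unset Strict Implicit.

Section ReflTransClosure.
Variable A : Type.

Lemma clos_rt_monotone (R R' : relation A) :
  inclusion A R R' -> inclusion A (clos_refl_trans A R) (clos_refl_trans A R').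
Proof. intros HRR' x y H; induction H; eauto using rt_step, rt_refl, rt_trans. Qed.

Lemma clos_rt_symmetric (R : relation A) :
  symmetric A R -> symmetric A (clos_refl_trans A R).
Proof. intros HR x y H; induction H; eauto using rt_step, rt_refl, rt_trans. Qed.

Lemma clos_rt_within_reachable (R : relation A) (y x : A) :
  clos_refl_trans A R y x ->
  clos_refl_trans A
    (fun a b => clos_refl_trans A R y a /\ clos_refl_trans A R y b /\ R a b) y x.
Proof.
  intros Hyx; induction Hyx as [|z w Hyz IH Hzw] using clos_refl_trans_ind_left.
  - apply rt_refl.
  - apply rt_trans with z; [exact IH|].
    apply rt_step; repeat split; eauto using rt_trans, rt_step.
Qed.

End ReflTransClosure.

Section Walks.
Variables (V : Type) (adj : V -> V -> Prop).
Hypothesis adj_sym : forall x y, adj x y -> adj y x.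

Lemma walk_app m n x y z : walk adj m x y -> walk adj n y z -> walk adj (m + n) x z.
Proof. intros Hxy; revert n z; induction Hxy; simpl; eauto using walk. Qed.

Lemma walk_snoc n x y z : walk adj n x y -> adj y z -> walk adj (S n) x z.
Proof.
  intros Hxy Hyz; rewrite <- Nat.add_1_r.
  eapply walk_app; eauto using walk.
Qed.

Lemma walk_rev n x y : walk adj n x y -> walk adj n y x.
Proof. induction 1; eauto using walk, walk_snoc. Qed.

Lemma is_dist_unique x y m n : is_dist adj x y m -> is_dist adj x y n -> m = n.
Proof. intros [Hm Hmin] [Hn Hnin]; specialize (Hmin n Hn); specialize (Hnin m Hm); lia. Qed.

Lemma exists_dist x y : (exists n, walk adj n x y) -> exists d, is_dist adj x y d.
Proof.
  intros Hxy.
  destruct (dec_inh_nat_subset_has_unique_least_element (fun n => walk adj n x y)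
              (fun n => classic _) Hxy) as (d & [Hd Hmin] & _).
  exists d; split; assumption.
Qed.

Lemma dist_le_refl x M : dist_le adj x x M.
Proof. exists 0; split; [lia | constructor]. Qed.

Lemma dist_le_adj x y : adj x y -> dist_le adj x y 1.
Proof. exists 1; split; eauto using walk. Qed.

Lemma dist_le_weaken x y a b : a <= b -> dist_le adj x y a -> dist_le adj x y b.
Proof. intros Hab (m & Hm & Hw); exists m; split; [lia | exact Hw]. Qed.

Lemma dist_le_trans x y z a b :
  dist_le adj x y a -> dist_le adj y z b -> dist_le adj x z (a + b).
Proof.
  intros (m & Hm & Hxy) (n & Hn & Hyz); exists (m + n).
  split; [lia | eapply walk_app; eauto].
Qed.

Lemma dist_le_sym x y a : dist_le adj x y a -> dist_le adj y x a.
Proof. intros (m & Hm & Hw); exists m; split; [exact Hm | apply walk_rev, Hw]. Qed.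

Lemma M_disjoint_sub M (X Y X' Y' : V -> Prop) :
  (forall x, X' x -> X x) -> (forall y, Y' y -> Y y) ->
  M_disjoint adj M X Y -> M_disjoint adj M X' Y'.
Proof. intros HX HY HXY x y Hx Hy; apply HXY; auto. Qed.

Lemma M_connected_union M (X Y : V -> Prop) y z :
  M_connected adj M X -> M_connected adj M Y -> X y -> Y z -> dist_le adj y z M ->
  M_connected adj M (fun w => X w \/ Y w).
Proof.
  intros HX HY Hy Hz Hyz.
  set (R := fun a b => (X a \/ Y a) /\ (X b \/ Y b) /\ dist_le adj a b M).
  assert (R_sym : symmetric V R) by (intros a b (? & ? & ?); red; auto using dist_le_sym).
  assert (inX : forall u v, X u -> X v -> clos_refl_trans V R u v).
  { intros u v Hu Hv; apply (clos_rt_monotone (R := fun a b => X a /\ X b /\ dist_le adj a b M)).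
    - intros a b (? & ? & ?); red; auto.
    - apply HX; assumption. }
  assert (inY : forall u v, Y u -> Y v -> clos_refl_trans V R u v).
  { intros u v Hu Hv; apply (clos_rt_monotone (R := fun a b => Y a /\ Y b /\ dist_le adj a b M)).
    - intros a b (? & ? & ?); red; auto.
    - apply HY; assumption. }
  assert (XY : forall u v, X u -> Y v -> clos_refl_trans V R u v).
  { intros u v Hu Hv; apply rt_trans with y; [auto|].
    apply rt_trans with z; [apply rt_step; red; auto | auto]. }
  intros u v [Hu|Hu] [Hv|Hv]; auto.
  apply clos_rt_symmetric; auto.
Qed.

Lemma last_cons_default (x : V) l d d' : last (x :: l) d = last (x :: l) d'.
Proof. revert x; induction l as [|b l IH]; intros x; [reflexivity | apply IH]. Qed.

Lemma last_app_cons l1 (x : V) l2 d : last (l1 ++ x :: l2) d = last (x :: l2) d.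
Proof. induction l1 as [|a [|b l1] IH]; [reflexivity.. | apply IH]. Qed.

Lemma last_cons_In (x : V) l d : In (last (x :: l) d) (x :: l).
Proof.
  revert x; induction l as [|b l IH]; intros x; [left; reflexivity|].
  right; apply IH.
Qed.

Lemma chain_app_r l1 l2 : chain adj (l1 ++ l2) -> chain adj l2.
Proof.
  induction l1 as [|a l1 IH]; simpl; [tauto|].
  intros Hc; apply IH; destruct (l1 ++ l2); simpl in *; tauto.
Qed.

Lemma path_ends_In l x y : is_path adj l x y -> In x l /\ In y l.
Proof.
  intros (_ & _ & Hhd & Hlast); destruct l as [|a l]; [discriminate|].
  injection Hhd as <-; split; [left; reflexivity | subst y; apply last_cons_In].
Qed.

Lemma exists_path_within (X : V -> Prop) x y :
  clos_refl_trans V (fun a b => X a /\ X b /\ adj a b) x y -> X x ->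
  exists l, is_path adj l x y /\ forall z, In z l -> X z.
Proof.
  intros Hxy; apply clos_rt_rt1n in Hxy.
  induction Hxy as [x|x w y (_ & Hw & Hxw) _ IH]; intros Hx.
  - exists [x]; split; [repeat split; repeat constructor; auto|].
    intros z [<-|[]]; exact Hx.
  - destruct (IH Hw) as ([|b l] & (Hnd & Hch & Hhd & Hlast) & Hin); [discriminate|].
    injection Hhd as ->.
    destruct (classic (In x (w :: l))) as [Hxl|Hxl].
    + (* shortcut the walk at the earlier visit of [x] *)
      destruct (in_split _ _ Hxl) as (l1 & l2 & Hsplit); rewrite Hsplit in *.
      exists (x :: l2); split.
      * split; [eapply NoDup_app_remove_l; eauto|].
        split; [eapply chain_app_r; eauto|].
        split; [reflexivity|].
        rewrite <- Hlast, last_app_cons; apply last_cons_default.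
      * intros z Hz; apply Hin, in_or_app; right; exact Hz.
    + exists (x :: w :: l); split.
      * split; [constructor; assumption|].
        split; [split; assumption|].
        split; [reflexivity|].
        rewrite <- Hlast; exact (last_cons_default w l x w).
      * intros z [<-|Hz]; auto.
Qed.

Lemma chain_head_reaches x l :
  chain adj (x :: l) -> forall z, In z (x :: l) ->
  clos_refl_trans V (fun a b => In a (x :: l) /\ In b (x :: l) /\ adj a b) x z.
Proof.
  revert x; induction l as [|b l IH]; intros x Hc z Hz.
  - destruct Hz as [<-|[]]; apply rt_refl.
  - destruct Hz as [<-|Hz]; [apply rt_refl|].
    destruct Hc as [Hxb Hc].
    apply rt_trans with b; [apply rt_step; simpl; auto|].
    eapply clos_rt_monotone; [|exact (IH b Hc z Hz)].
    intros u v (? & ? & ?); simpl; auto.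
Qed.

Lemma path_connected l x y : is_path adj l x y -> conn_set adj (fun z => In z l).
Proof.
  intros (_ & Hch & Hhd & _); destruct l as [|a l]; [discriminate|].
  split; [exists a; left; reflexivity|].
  intros u v Hu Hv; apply rt_trans with a.
  - apply clos_rt_symmetric; [intros p q (? & ? & ?); auto|].
    apply chain_head_reaches; assumption.
  - apply chain_head_reaches; assumption.
Qed.

End Walks.

Section Skeleton.
Variables (V : Type) (adj : V -> V -> Prop).
Hypothesis adj_sym : forall x y, adj x y -> adj y x.
Hypothesis adj_connected : graph_connected adj.
Variables (x0 : V) (M : nat).
Hypothesis M_pos : 1 <= M.

Local Notation block := (skel_vertex adj x0 M M).
Local Notation skel := (@skel_adj V adj x0 M M).

Definition depth (x : V) : nat :=
  proj1_sig (constructive_indefinite_description _ (exists_dist (adj_connected x x0))).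

Lemma depth_spec x : is_dist adj x x0 (depth x).
Proof. unfold depth; destruct constructive_indefinite_description; assumption. Qed.

Lemma depth_walk m x y : walk adj m x y -> depth x <= m + depth y.
Proof. intros Hxy; apply (proj2 (depth_spec x)), walk_app with y; [exact Hxy | apply depth_spec]. Qed.

Definition layer (x : V) : Z := ((Z.of_nat (depth x) - 1) / Z.of_nat M)%Z.

Lemma layer_spec x :
  (Z.of_nat M * layer x < Z.of_nat (depth x) <= Z.of_nat M * (layer x + 1))%Z.
Proof.
  unfold layer.
  pose proof (Z.div_mod (Z.of_nat (depth x) - 1) (Z.of_nat M) ltac:(lia)).
  pose proof (Z.mod_pos_bound (Z.of_nat (depth x) - 1) (Z.of_nat M) ltac:(lia)).
  lia.
Qed.

Lemma in_layer_iff N x : in_layer adj x0 M N x <-> layer x = N.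
Proof.
  pose proof (layer_spec x).
  split.
  - intros (n & Hn & HnN); rewrite (is_dist_unique Hn (depth_spec x)) in HnN; nia.
  - intros <-; exists (depth x); split; [apply depth_spec | lia].
Qed.

Lemma layer_walk m x y : m <= M -> walk adj m x y -> (layer x - 1 <= layer y <= layer x + 1)%Z.
Proof.
  intros Hm Hxy.
  pose proof (depth_walk Hxy); pose proof (depth_walk (walk_rev adj_sym Hxy)).
  pose proof (layer_spec x); pose proof (layer_spec y).
  nia.
Qed.

Lemma layer_adj x y : adj x y -> (layer x - 1 <= layer y <= layer x + 1)%Z.
Proof. intros Hxy; apply (layer_walk (m := 1)); eauto using walk. Qed.

Lemma block_layer B x y : is_block adj x0 M M B -> B x -> B y -> layer x = layer y.
Proof.
  intros (N & _ & HBN & _) Hx Hy.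
  apply HBN, in_layer_iff in Hx; apply HBN, in_layer_iff in Hy; congruence.
Qed.

Lemma block_maximal_near B B' y z :
  is_block adj x0 M M B -> B y -> B' z -> dist_le adj y z M ->
  M_connected adj M B' -> (forall x, B' x -> layer x = layer y) ->
  forall x, B' x -> B x.
Proof.
  intros (N & _ & HBN & HBc & Hmax) Hy Hz Hyz HB'c HB'layer.
  assert (HyN : layer y = N) by (apply in_layer_iff, HBN, Hy).
  intros x Hx; apply (Hmax (fun w => B w \/ B' w)); [| | intros; left; assumption | right; exact Hx].
  - intros w [Hw|Hw]; [apply HBN, Hw | apply in_layer_iff; rewrite HB'layer; assumption].
  - exact (M_connected_union adj_sym HBc HB'c Hy Hz Hyz).
Qed.

Lemma block_mem_near B y a :
  is_block adj x0 M M B -> B y -> layer a = layer y -> dist_le adj y a M -> B a.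
Proof.
  intros HB Hy Ha Hya.
  apply (block_maximal_near (B' := fun w => w = a) HB Hy eq_refl Hya); [|intros w ->; exact Ha|reflexivity].
  intros u v -> ->; apply rt_refl.
Qed.

Lemma skel_vertex_ext (C D : block) : (forall x, proj1_sig C x <-> proj1_sig D x) -> C = D.
Proof.
  destruct C as [B HB], D as [B' HB']; simpl; intros HBB'.
  assert (B = B') as <-.
  { apply functional_extensionality; intros x; apply propositional_extensionality, HBB'. }
  f_equal; apply proof_irrelevance.
Qed.

Lemma skel_adj_sym (C D : block) : skel C D -> skel D C.
Proof. intros (HCD & a & b & Ha & Hb & Hab); split; [congruence | exists b, a; auto]. Qed.

Lemma walk_crosses_layer m y z L :
  walk adj m y z -> (layer y <= L)%Z -> (L + 1 <= layer z)%Z ->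
  exists a b, adj a b /\ layer a = L /\ layer b = (L + 1)%Z /\
              dist_le adj y a m /\ dist_le adj b z m.
Proof.
  induction 1 as [y|m y w z Hyw Hwz IH]; intros Hy Hz; [lia|].
  destruct (Z_le_gt_dec (layer w) L) as [HwL|HwL].
  - destruct (IH HwL Hz) as (a & b & Hab & Ha & Hb & (k & Hk & Hwa) & Hbz).
    exists a, b; repeat split; auto.
    + exists (S k); split; [lia | eauto using walk].
    + eapply dist_le_weaken; [|exact Hbz]; lia.
  - pose proof (layer_adj Hyw).
    exists y, w; repeat split; [assumption | lia | lia | apply dist_le_refl |].
    exists m; eauto.
Qed.

Lemma skel_adj_of_layer_succ (C D : block) y z :
  proj1_sig C y -> proj1_sig D z -> dist_le adj y z M -> layer z = (layer y + 1)%Z -> skel C D.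
Proof.
  intros Hy Hz (m & Hm & Hyz) Hlayer.
  destruct (walk_crosses_layer Hyz (Z.le_refl _) (Z.eq_le_incl _ _ (eq_sym Hlayer)))
    as (a & b & Hab & Ha & Hb & Hya & Hbz).
  split.
  - intros <-; pose proof (block_layer (proj2_sig C) Hy Hz); lia.
  - exists a, b; repeat split; [| |exact Hab].
    + apply (block_mem_near (proj2_sig C) Hy); auto.
      eapply dist_le_weaken; eauto.
    + apply (block_mem_near (proj2_sig D) Hz); [congruence|].
      apply (dist_le_sym adj_sym); eapply dist_le_weaken; eauto.
Qed.

Lemma block_incl_near (C D : block) y z :
  proj1_sig C y -> proj1_sig D z -> layer y = layer z -> dist_le adj y z M ->
  forall x, proj1_sig D x -> proj1_sig C x.
Proof.
  intros Hy Hz Hlayer Hyz; destruct (proj2_sig D) as (_ & _ & _ & HDc & _).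
  apply (block_maximal_near (proj2_sig C) Hy Hz Hyz HDc).
  intros x Hx; rewrite Hlayer; exact (block_layer (proj2_sig D) Hx Hz).
Qed.

Lemma skel_dist_le_1 (C D : block) y z :
  proj1_sig C y -> proj1_sig D z -> dist_le adj y z M -> dist_le skel C D 1.
Proof.
  intros Hy Hz Hyz.
  pose proof Hyz as (m & Hm & Hw); pose proof (layer_walk Hm Hw).
  destruct (Z.eq_dec (layer y) (layer z)) as [Heq|Hne].
  - replace D with C; [apply dist_le_refl|].
    apply skel_vertex_ext; intros x; split.
    + apply (block_incl_near Hz Hy (eq_sym Heq) (dist_le_sym adj_sym Hyz)).
    + apply (block_incl_near Hy Hz Heq Hyz).
  - apply dist_le_adj.
    destruct (Z.eq_dec (layer z) (layer y + 1)) as [Hup|Hdown].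
    + exact (skel_adj_of_layer_succ Hy Hz Hyz Hup).
    + apply skel_adj_sym, (skel_adj_of_layer_succ Hz Hy (dist_le_sym adj_sym Hyz)); lia.
Qed.

Lemma exists_block y : exists C : block, proj1_sig C y.
Proof.
  set (R := fun a b => layer a = layer y /\ layer b = layer y /\ dist_le adj a b M).
  set (B := fun x => layer x = layer y /\ clos_refl_trans V R y x).
  assert (HB : is_block adj x0 M M B).
  { exists (layer y); split; [exists y; split; [reflexivity | apply rt_refl]|].
    split; [intros x [Hx _]; apply in_layer_iff, Hx|].
    split.
    - assert (from_y : forall x, B x ->
                clos_refl_trans V (fun a b => B a /\ B b /\ dist_le adj a b M) y x).
      { intros x [_ Hx]; eapply clos_rt_monotone; [|apply clos_rt_within_reachable, Hx].
        intros a b (Ha & Hb & Hla & Hlb & Hab); repeat split; assumption. }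
      intros x x' Hx Hx'; apply rt_trans with y; [|auto].
      apply clos_rt_symmetric; [|auto].
      intros a b (Ha & Hb & Hab); split; [exact Hb | split; [exact Ha | exact (dist_le_sym adj_sym Hab)]].
    - intros B' HB' HB'c HBB' x Hx; split; [apply in_layer_iff, HB', Hx|].
      eapply clos_rt_monotone; [|apply HB'c; [apply HBB'; split; [reflexivity | apply rt_refl] | exact Hx]].
      intros a b (Ha & Hb & Hab); repeat split; auto; apply in_layer_iff, HB'; assumption. }
  exists (exist _ B HB); split; [reflexivity | apply rt_refl].
Qed.

Definition lift (F : block -> Prop) (y : V) : Prop :=
  exists C : block, F C /\ exists p, proj1_sig C p /\ dist_le adj p y M.

Definition lift_adj (F : block -> Prop) (a b : V) : Prop := lift F a /\ lift F b /\ adj a b.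

Lemma lift_mem F (C : block) p : F C -> proj1_sig C p -> lift F p.
Proof. intros HC Hp; exists C; split; [exact HC | exists p; split; [exact Hp | apply dist_le_refl]]. Qed.

Lemma lift_M_disjoint F1 F2 : M_disjoint skel 3 F1 F2 -> M_disjoint adj M (lift F1) (lift F2).
Proof.
  intros HF y z (A & HA & p & Hp & Hpy) (D & HD & q & Hq & Hqz) Hyz.
  destruct (exists_block y) as [Cy HCy], (exists_block z) as [Cz HCz].
  apply (HF A D HA HD).
  change 3 with (1 + 1 + 1); apply dist_le_trans with Cz; [apply dist_le_trans with Cy |].
  - exact (skel_dist_le_1 Hp HCy Hpy).
  - exact (skel_dist_le_1 HCy HCz Hyz).
  - exact (skel_dist_le_1 HCz Hq (dist_le_sym adj_sym Hqz)).
Qed.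

Lemma lift_reaches F (C : block) p y m :
  F C -> proj1_sig C p -> m <= M -> walk adj m p y -> clos_refl_trans V (lift_adj F) p y.
Proof.
  intros HC Hp.
  enough (H : forall k w, walk adj k w y -> forall j, walk adj j p w -> j + k <= M ->
                clos_refl_trans V (lift_adj F) w y).
  { intros Hm Hpy; apply (H m p Hpy 0); [constructor | lia]. }
  induction 1 as [w|k w w' y Hww' Hw'y IH]; intros j Hpw Hjk; [apply rt_refl|].
  apply rt_trans with w'; [apply rt_step | apply (IH (S j)); [eapply walk_snoc; eauto | lia]].
  split; [|split; [|exact Hww']]; exists C; (split; [exact HC|]); exists p; (split; [exact Hp|]).
  - exists j; split; [lia | exact Hpw].
  - exists (S j); split; [lia | eapply walk_snoc; eauto].
Qed.

Lemma lift_block F (C : block) p q :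
  F C -> proj1_sig C p -> proj1_sig C q -> clos_refl_trans V (lift_adj F) p q.
Proof.
  intros HC Hp Hq; destruct (proj2_sig C) as (_ & _ & _ & HCc & _).
  specialize (HCc p q Hp Hq); clear Hp Hq.
  induction HCc as [a b (Ha & _ & m & Hm & Hab)| a | a b c _ IHab _ IHbc].
  - exact (lift_reaches HC Ha Hm Hab).
  - apply rt_refl.
  - exact (rt_trans _ _ _ _ _ IHab IHbc).
Qed.

Lemma lift_skel_reaches F (C D : block) :
  clos_refl_trans block (fun A B => F A /\ F B /\ skel A B) C D -> F C ->
  forall p q, proj1_sig C p -> proj1_sig D q -> clos_refl_trans V (lift_adj F) p q.
Proof.
  intros HCD; apply clos_rt_rt1n in HCD.
  induction HCD as [C|C E D (_ & HE & _ & a & b & Ha & Hb & Hab) _ IH]; intros HC p q Hp Hq.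
  - exact (lift_block HC Hp Hq).
  - apply rt_trans with a; [exact (lift_block HC Hp Ha)|].
    apply rt_trans with b; [|exact (IH HE b q Hb Hq)].
    apply rt_step; split; [exact (lift_mem HC Ha) | split; [exact (lift_mem HE Hb) | exact Hab]].
Qed.

Lemma conn_set_lift F : conn_set skel F -> conn_set adj (lift F).
Proof.
  intros ([C HC] & HFc); split.
  - destruct (proj2_sig C) as (_ & [p Hp] & _); exists p; exact (lift_mem HC Hp).
  - intros y y' (A & HA & p & Hp & m & Hm & Hpy) (A' & HA' & p' & Hp' & m' & Hm' & Hpy').
    apply rt_trans with p.
    + apply clos_rt_symmetric; [intros a b (? & ? & ?); split; auto|].
      exact (lift_reaches HA Hp Hm Hpy).
    + apply rt_trans with p'; [exact (lift_skel_reaches (HFc A A' HA HA') HA Hp Hp')|].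
      exact (lift_reaches HA' Hp' Hm' Hpy').
Qed.

Lemma fat_minor_of_skel_fat_minor VH EH (endsH : EH -> VH * VH) :
  fat_minor skel endsH 3 -> fat_minor adj endsH M.
Proof.
  intros (B & P & HB & HP & HBB & HPP & HBP).
  assert (HQ : forall e, exists l,
             (exists p q, lift (B (fst (endsH e))) p /\ lift (B (snd (endsH e))) q /\
                          is_path adj l p q) /\
             forall z, In z l -> lift (fun C => In C (P e)) z).
  { intros e; destruct (HP e) as (C & D & HC & HD & HCD).
    destruct (path_ends_In HCD) as [HCe HDe].
    destruct (proj2_sig C) as (_ & [p Hp] & _), (proj2_sig D) as (_ & [q Hq] & _).
    destruct (conn_set_lift (path_connected (@skel_adj_sym) HCD)) as [_ Hconn].
    destruct (exists_path_within (Hconn p q (lift_mem HCe Hp) (lift_mem HDe Hq)) (lift_mem HCe Hp))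
      as (l & Hl & Hin).
    exists l; split; [exists p, q; split; [|split]|]; eauto using lift_mem. }
  destruct (functional_choice _ HQ) as [Q HQ'].
  exists (fun v => lift (B v)), Q.
  split; [intros v; apply conn_set_lift, HB|].
  split; [intros e; apply HQ'|].
  split; [intros u v Huv; apply lift_M_disjoint, HBB, Huv|].
  split; [intros e f Hef|intros v e Hv1 Hv2].
  - apply (M_disjoint_sub (proj2 (HQ' e)) (proj2 (HQ' f))), lift_M_disjoint, HPP, Hef.
  - apply (M_disjoint_sub (fun x Hx => Hx) (proj2 (HQ' e))), lift_M_disjoint, HBP; assumption.
Qed.

End Skeleton.

Lemma skel_vertex_scale_pos V (adj : V -> V -> Prop) x0 lam k :
  skel_vertex adj x0 lam k -> 1 <= lam.
Proof.
  intros (B & N & [x Hx] & HBN & _); destruct (HBN x Hx) as (n & _ & Hn).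
  destruct lam; simpl in Hn; lia.
Qed.

Lemma fat_minor_of_empty V (adj : V -> V -> Prop) VH EH (endsH : EH -> VH * VH) M :
  (VH -> False) -> fat_minor adj endsH M.
Proof.
  intros HVH; exists (fun _ _ => False), (fun _ => []).
  split; [intros v; contradiction (HVH v)|].
  split; [intros e; contradiction (HVH (fst (endsH e)))|].
  split; [intros u; contradiction (HVH u)|].
  split; [intros e; contradiction (HVH (fst (endsH e)))|].
  intros v; contradiction (HVH v).
Qed.

Theorem theorem4 (V : Type) (adj : V -> V -> Prop)
  (VH EH : Type) (endsH : EH -> VH * VH) (M : nat) (x0 : V) :
  (forall x y, adj x y -> adj y x) ->
  graph_connected adj ->
  coarsely_bottlenecked adj ->
  ~ asymptotic_minor adj endsH ->
  ~ fat_minor adj endsH M ->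
  ~ fat_minor (@skel_adj V adj x0 M M) endsH 3.
Proof.
  intros adj_sym adj_connected _ _ no_minor skel_minor; apply no_minor.
  destruct (classic (inhabited VH)) as [[v] | VH_empty].
  - apply (fat_minor_of_skel_fat_minor adj_sym adj_connected (x0 := x0)); [|exact skel_minor].
    destruct skel_minor as (B & _ & HB & _); destruct (HB v) as [[C _] _].
    exact (skel_vertex_scale_pos C).
  - apply fat_minor_of_empty; intros v; exact (VH_empty (inhabits v)).
Qed.
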